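(* Let $R,S$ be Polish spaces, $e:S\to R$ a Borel map, $f:S\to\mathbb{R}^d$ a Borel map, and $\lambda\in\mathcal{M}_+(S)$ with $f\in L^1(\lambda)$. Assume that $$\mathcal{H}\big(e_\sharp(f\lambda)\,\big|\,e_\sharp\lambda\big)=\mathcal{H}(f\lambda\,|\,\lambda).$$ Let $v:R\to\mathbb{R}^d$ be a version of the density of $e_\sharp(f\lambda)$ with respect to $e_\sharp\lambda$. Then $f=v\circ e$ $\lambda$-a.e.
   Context: $\mathcal{M}_+(S)$ denotes finite positive Borel measures. For $\mu$ a finite positive measure and $\nu$ an $\mathbb{R}^d$-valued measure with Lebesgue decomposition $\nu=\frac{d\nu}{d\mu}\mu+\nu^\perp$, $\nu^\perp\perp\mu$, set $\mathcal{H}(\nu|\mu):=\int\sqrt{1+|\frac{d\nu}{d\mu}|^2}\,d\mu+|\nu^\perp|$, where $|\nu^\perp|$ is the total variation (total mass) of $\nu^\perp$. *)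

From HB Require Import structures.
From mathcomp Require Import all_boot all_order all_algebra.
From mathcomp Require Import all_classical all_reals all_analysis.
Set Implicit Arguments. Unset Strict Implicit. Unset Printing Implicit Defensive.
Import Order.TTheory GRing.Theory Num.Theory.
Local Open Scope classical_set_scope.
Local Open Scope ring_scope.

Section Defs.
Variable K : realType.

Definition enorm (n : nat) (x : 'rV[K]_n) : K := Num.sqrt (\sum_(i < n) x 0 i ^+ 2).

Definition is_metric (T : Type) (dist : T -> T -> K) :=
  [/\ forall x y, 0 <= dist x y,
      forall x y, dist x y = 0 <-> x = y,
      forall x y, dist x y = dist y x &
      forall x y z, dist x z <= dist x y + dist y z].

Definition metric_open (T : Type) (dist : T -> T -> K) (U : set T) :=
  forall x, U x -> exists2 e : K, 0 < e & forall y, dist x y < e -> U y.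

Definition metric_complete (T : Type) (dist : T -> T -> K) :=
  forall u : nat -> T,
    (forall e : K, 0 < e -> exists N, forall m n, (N <= m)%N -> (N <= n)%N ->
       dist (u m) (u n) < e) ->
    exists x, forall e : K, 0 < e -> exists N, forall n, (N <= n)%N -> dist (u n) x < e.

Definition metric_separable (T : Type) (dist : T -> T -> K) :=
  exists D : set T, countable D /\
    forall x (e : K), 0 < e -> exists2 y, D y & dist x y < e.

Definition polish_borel (dT : measure_display) (T : measurableType dT) :=
  exists dist : T -> T -> K,
    [/\ is_metric dist, metric_complete dist, metric_separable dist &
        (@measurable dT T) = <<s metric_open dist >>].

Definition dens_vmeasure (dT : measure_display) (T : measurableType dT) (n : nat)
  (mu : set T -> \bar K) (g : T -> 'rV[K]_n) : set T -> 'rV[K]_n :=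
  fun A => \row_(i < n) fine (\int[mu]_(x in A) (g x 0 i)%:E).

Definition push_vmeasure (dT dU : measure_display) (T : measurableType dT)
  (U : measurableType dU) (n : nat) (nu : set T -> 'rV[K]_n) (e : T -> U)
  : set U -> 'rV[K]_n := fun B => nu (e @^-1` B).

Definition is_density (dT : measure_display) (T : measurableType dT) (n : nat)
  (mu : set T -> \bar K) (nu : set T -> 'rV[K]_n) (g : T -> 'rV[K]_n) :=
  [/\ forall i, measurable_fun setT (fun x => g x 0 i),
      forall i, mu.-integrable setT (fun x => (g x 0 i)%:E) &
      forall A, measurable A -> nu A = dens_vmeasure mu g A].

(** Lebesgue decomposition nu = g mu + nu^perp with nu^perp = nu restricted to
    the mu-null measurable set N. *)
Definition lebesgue_decomp (dT : measure_display) (T : measurableType dT) (n : nat)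
  (mu : set T -> \bar K) (nu : set T -> 'rV[K]_n) (g : T -> 'rV[K]_n) (N : set T) :=
  [/\ forall i, measurable_fun setT (fun x => g x 0 i),
      forall i, mu.-integrable setT (fun x => (g x 0 i)%:E),
      measurable N, mu N = 0%E &
      forall A, measurable A -> nu A = dens_vmeasure mu g A + nu (A `&` N)].

Definition total_variation_on (dT : measure_display) (T : measurableType dT) (n : nat)
  (nu : set T -> 'rV[K]_n) (N : set T) : \bar K :=
  ereal_sup [set (\sum_(i < m) enorm (nu (F i)))%:E | m in [set: nat] &
     F in [set F : nat -> set T | [/\ forall i, measurable (F i),
                                      forall i, F i `<=` N &
                                      trivIset setT F]]].

Definition H_value (dT : measure_display) (T : measurableType dT) (n : nat)
  (mu : set T -> \bar K) (nu : set T -> 'rV[K]_n) (h : \bar K) :=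
  exists g N, lebesgue_decomp mu nu g N /\
    h = (\int[mu]_x (Num.sqrt (1 + enorm (g x) ^+ 2))%:E + total_variation_on nu N)%E.

Definition Hfun (dT : measure_display) (T : measurableType dT) (n : nat)
  (mu : set T -> \bar K) (nu : set T -> 'rV[K]_n) : \bar K :=
  xget +oo%E (H_value mu nu).

End Defs.

(* The integrand phi(a) = sqrt (1 + |a|^2) of H is the norm of (1, a), hence
   strictly convex, with gradient a / phi(a) of norm at most 1; its Bregman
   divergence phi(a) - phi(b) - grad phi(b).(a - b) is nonnegative and vanishes
   only for a = b (Cauchy-Schwarz and its equality case).  Both vector measures
   have densities, so each H is the integral of phi of the density.  As v o e
   has the same integrals as f over every preimage e^-1(B), f - v o e
   integrates to zero against every bounded function of e, in particular
   against grad phi(v o e).  Hence the integral of the divergence between f and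
   v o e is H(f lam | lam) - H(e#(f lam) | e# lam) = 0. *)

From HB Require Import structures.
From mathcomp Require Import all_boot all_order all_algebra.
From mathcomp Require Import all_classical all_reals all_analysis.
From mathcomp Require Import measurable_realfun ring lra.
Import Order.TTheory GRing.Theory Num.Theory.
Import HBNNSimple numFieldNormedType.Exports.
Local Open Scope classical_set_scope.
Local Open Scope ring_scope.
Set Implicit Arguments. Unset Strict Implicit.

Section lift_norm.
Variables (K : realType) (n : nat).
Implicit Types a b : 'rV[K]_n.

Lemma sumr_sqr_ge0 (a : 'I_n -> K) : 0 <= \sum_(i < n) a i ^+ 2.
Proof. by apply: sumr_ge0 => i _; exact: sqr_ge0. Qed.

Lemma enorm_sqr a : enorm a ^+ 2 = \sum_(i < n) a 0 i ^+ 2.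
Proof. by rewrite /enorm sqr_sqrtr // sumr_sqr_ge0. Qed.

Lemma enorm0 : enorm (0 : 'rV[K]_n) = 0.
Proof. by rewrite /enorm big1 ?sqrtr0 // => i _; rewrite mxE expr0n. Qed.

Lemma cauchy_schwarz_sum (a b : 'I_n -> K) :
  (\sum_(i < n) a i * b i) ^+ 2 <= (\sum_(i < n) a i ^+ 2) * (\sum_(i < n) b i ^+ 2).
Proof.
have lagrange : \sum_(i < n) \sum_(j < n) (a i * b j - a j * b i) ^+ 2 =
    2 * ((\sum_(i < n) a i ^+ 2) * (\sum_(i < n) b i ^+ 2)
         - (\sum_(i < n) a i * b i) ^+ 2).
  have -> : \sum_(i < n) \sum_(j < n) (a i * b j - a j * b i) ^+ 2 =
      \sum_(i < n) \sum_(j < n) (a i ^+ 2 * b j ^+ 2) +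
      \sum_(i < n) \sum_(j < n) (a j ^+ 2 * b i ^+ 2) -
      2 * \sum_(i < n) \sum_(j < n) (a i * b i * (a j * b j)).
    rewrite mulr_sumr -big_split -sumrB /=; apply: eq_bigr => i _.
    by rewrite mulr_sumr -big_split -sumrB /=; apply: eq_bigr => j _; ring.
  rewrite [X in _ + X - _]exchange_big /= expr2 !mulr_suml.
  under [X in _ = 2 * (X - _)]eq_bigr do rewrite mulr_sumr.
  under [X in _ = 2 * (_ - X)]eq_bigr do rewrite mulr_sumr.
  ring.
have : 0 <= \sum_(i < n) \sum_(j < n) (a i * b j - a j * b i) ^+ 2.
  by apply: sumr_ge0 => i _; exact: sumr_sqr_ge0.
by rewrite lagrange pmulr_rge0 // subr_ge0.
Qed.

Lemma sum_sqr_sub_le a b :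
  \sum_(i < n) (a 0 i - b 0 i) ^+ 2 <=
  (1 + \sum_(i < n) a 0 i ^+ 2) * (1 + \sum_(i < n) b 0 i ^+ 2)
   - (1 + \sum_(i < n) a 0 i * b 0 i) ^+ 2.
Proof.
have := cauchy_schwarz_sum (fun i => a 0 i) (fun i => b 0 i).
have -> : \sum_(i < n) (a 0 i - b 0 i) ^+ 2 = \sum_(i < n) a 0 i ^+ 2 +
    \sum_(i < n) b 0 i ^+ 2 - 2 * \sum_(i < n) a 0 i * b 0 i.
  by rewrite mulr_sumr -big_split -sumrB /=; apply: eq_bigr => i _; ring.
by move=> /=; nra.
Qed.

Definition lift_norm a := Num.sqrt (1 + enorm a ^+ 2).

Lemma lift_norm_sqr a : lift_norm a ^+ 2 = 1 + \sum_(i < n) a 0 i ^+ 2.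
Proof. by rewrite /lift_norm sqr_sqrtr enorm_sqr // addr_ge0 // sumr_sqr_ge0. Qed.

Lemma lift_norm_gt0 a : 0 < lift_norm a.
Proof. by rewrite sqrtr_gt0 (lt_le_trans ltr01) // lerDl sqr_ge0. Qed.

Lemma lift_norm_le a : lift_norm a <= 1 + \sum_(i < n) `|a 0 i|.
Proof.
have [sum_le sum_ge0] : \sum_(i < n) a 0 i ^+ 2 <= (\sum_(i < n) `|a 0 i|) ^+ 2 /\
    0 <= \sum_(i < n) `|a 0 i|.
  apply: (big_ind2 (fun u v => u <= v ^+ 2 /\ 0 <= v)) => [|x1 x2 y1 y2 [] ? ? [] ? ?|i _].
  - by rewrite expr0n.
  - by split; [nra | exact: addr_ge0].
  - by rewrite -normrX ger0_norm ?sqr_ge0.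
rewrite -(ger0_norm (addr_ge0 ler01 sum_ge0)) -sqrtr_sqr /lift_norm enorm_sqr.
by rewrite ler_wsqrtr //; nra.
Qed.

Lemma ler_lift_norm_mul a b : 1 + \sum_(i < n) a 0 i * b 0 i <= lift_norm a * lift_norm b.
Proof.
have prod_ge0 := mulr_ge0 (ltW (lift_norm_gt0 a)) (ltW (lift_norm_gt0 b)).
apply: le_trans (ler_norm _) _; rewrite -sqrtr_sqr -(ger0_norm prod_ge0) -sqrtr_sqr.
rewrite ler_wsqrtr // exprMn !lift_norm_sqr -subr_ge0.
exact: le_trans (sumr_sqr_ge0 _) (sum_sqr_sub_le a b).
Qed.

Lemma lift_norm_mul_eq a b :
  lift_norm a * lift_norm b = 1 + \sum_(i < n) a 0 i * b 0 i -> a = b.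
Proof.
move=> /(congr1 (fun x => x ^+ 2)); rewrite exprMn !lift_norm_sqr => /eqP.
rewrite -subr_eq0 => /eqP sub_eq0.
have : \sum_(i < n) (a 0 i - b 0 i) ^+ 2 = 0.
  apply/eqP; rewrite eq_le sumr_sqr_ge0 andbT.
  by have := sum_sqr_sub_le a b; rewrite sub_eq0.
move=> /psumr_eq0P sqr_eq0; apply/rowP => j.
by apply/eqP; rewrite -subr_eq0 -sqrf_eq0 sqr_eq0 // => i _; exact: sqr_ge0.
Qed.

Definition lift_grad b i := b 0 i / lift_norm b.

Lemma norm_lift_grad_le1 b i : `|lift_grad b i| <= 1.
Proof.
rewrite normrM normfV (gtr0_norm (lift_norm_gt0 b)) ler_pdivrMr ?lift_norm_gt0 // mul1r.
rewrite -sqrtr_sqr /lift_norm enorm_sqr ler_wsqrtr // (bigD1 i) //= addrCA lerDl.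
by rewrite addr_ge0 // sumr_ge0 // => j _; exact: sqr_ge0.
Qed.

Definition bregman a b :=
  lift_norm a - lift_norm b - \sum_(i < n) lift_grad b i * (a 0 i - b 0 i).

Lemma mul_bregman a b :
  lift_norm b * bregman a b = lift_norm a * lift_norm b - (1 + \sum_(i < n) a 0 i * b 0 i).
Proof.
have nb_neq0 : lift_norm b != 0 by rewrite gt_eqF ?lift_norm_gt0.
rewrite /bregman; have -> : \sum_(i < n) lift_grad b i * (a 0 i - b 0 i) =
    (\sum_(i < n) a 0 i * b 0 i - \sum_(i < n) b 0 i ^+ 2) / lift_norm b.
  by rewrite -sumrB mulr_suml; apply: eq_bigr => i _; rewrite /lift_grad; ring.
rewrite !mulrBr mulrCA divff // mulr1 -expr2 lift_norm_sqr; ring.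
Qed.

Lemma bregman_ge0 a b : 0 <= bregman a b.
Proof.
by rewrite -(pmulr_rge0 _ (lift_norm_gt0 b)) mul_bregman subr_ge0 ler_lift_norm_mul.
Qed.

Lemma bregman_eq0 a b : bregman a b = 0 -> a = b.
Proof.
move=> /(congr1 ( *%R (lift_norm b))); rewrite mul_bregman mulr0 => /eqP.
by rewrite subr_eq0 => /eqP /lift_norm_mul_eq.
Qed.

End lift_norm.

Lemma continuous_inv_sqrt1Dnorm (K : realType) :
  continuous (fun t : K => (Num.sqrt (1 + `|t|))^-1).
Proof.
move=> t; apply: (@continuous_comp _ _ _ (fun t : K => Num.sqrt (1 + `|t|))).
  apply: continuous_comp; last exact: sqrt_continuous.
  by apply: continuousD; [exact: cst_continuous | exact: norm_continuous].
by apply: inv_continuous; rewrite gt_eqF // sqrtr_gt0 (lt_le_trans ltr01) // lerDl.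
Qed.

Section lift_norm_measurable.
Variables (d : measure_display) (T : measurableType d) (K : realType) (n : nat).
Variables (g : T -> 'rV[K]_n).
Hypothesis mg : forall i, measurable_fun setT (fun x => g x 0 i).

Let measurable_sum_sqr : measurable_fun setT (fun x => \sum_(i < n) g x 0 i ^+ 2).
Proof. by apply: measurable_sum => i; exact: measurable_funX. Qed.

Lemma measurable_lift_norm : measurable_fun setT (fun x => lift_norm (g x)).
Proof.
apply: measurableT_comp (continuous_measurable_fun (@sqrt_continuous K)) _.
apply: measurable_funD => //; apply: measurable_funX.
exact: measurableT_comp (continuous_measurable_fun (@sqrt_continuous K)) measurable_sum_sqr.
Qed.

Lemma measurable_lift_grad i : measurable_fun setT (fun x => lift_grad (g x) i).
Proof.
have -> : (fun x => lift_grad (g x) i) =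
    (fun x => g x 0 i * (Num.sqrt (1 + `|\sum_(i < n) g x 0 i ^+ 2|))^-1).
  by apply/funext => x; rewrite /lift_grad /lift_norm enorm_sqr ger0_norm ?sumr_sqr_ge0.
apply: measurable_funM => //.
exact: measurableT_comp (continuous_measurable_fun (@continuous_inv_sqrt1Dnorm K))
  measurable_sum_sqr.
Qed.

Lemma integrable_lift_norm (lam : {finite_measure set T -> \bar K}) :
  (forall i, lam.-integrable setT (fun x => (g x 0 i)%:E)) ->
  lam.-integrable setT (fun x => (lift_norm (g x))%:E).
Proof.
move=> ig.
have ib : lam.-integrable setT (fun x => (1 + \sum_(i < n) `|g x 0 i|)%:E).
  under eq_fun do rewrite EFinD -sumEFin.
  apply: (integrableD measurableT); first exact: finite_measure_integrable_cst.
  by apply: integrable_sum => // i _; exact: (integrable_abse (ig i)).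
apply: le_integrable ib => //; first exact/measurable_EFinP/measurable_lift_norm.
move=> x _ /=; rewrite lee_fin ger0_norm ?(ltW (lift_norm_gt0 _)) //.
by rewrite ger0_norm ?addr_ge0 ?sumr_ge0 // lift_norm_le.
Qed.

End lift_norm_measurable.

Section Hfun_density.
Variables (d : measure_display) (T : measurableType d) (K : realType) (n : nat).
Variables (mu : {measure set T -> \bar K}) (nu : set T -> 'rV[K]_n).
Implicit Types (g : T -> 'rV[K]_n) (N : set T).

Lemma total_variation_on_eq0 N :
  (forall A, measurable A -> A `<=` N -> nu A = 0) -> total_variation_on nu N = 0%E.
Proof.
move=> nuN0; apply/eqP; rewrite eq_le; apply/andP; split.
  apply: ge_ereal_sup => _ [m _ [F [mF FN _] <-]].
  by rewrite big1 // => i _; rewrite nuN0 // enorm0.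
apply: ereal_sup_ubound; exists 0%N => //; exists (fun _ => set0).
  by split => // [i|]; [exact: sub0set | exact: trivIset_set0].
by rewrite big_ord0.
Qed.

Lemma dens_vmeasure_ae_eq g g' :
  (forall i, mu.-integrable setT (fun x => (g x 0 i)%:E)) ->
  (forall i, mu.-integrable setT (fun x => (g' x 0 i)%:E)) ->
  (forall A, measurable A -> dens_vmeasure mu g A = dens_vmeasure mu g' A) ->
  {ae mu, forall x, g x = g' x}.
Proof.
move=> ig ig' gg'.
have ae_coord i : ae_eq mu setT (fun x => (g x 0 i)%:E) (fun x => (g' x 0 i)%:E).
  apply: integral_ae_eq => //; first exact: measurable_int (ig' i).
  move=> E _ mE; have /rowP /(_ i) := gg' E mE; rewrite !mxE => gg'Ei.
  have fin_int h : mu.-integrable setT h -> (\int[mu]_(x in E) h x)%E \is a fin_num.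
    by move=> ih; apply: integrable_fin_num => //; exact: integrableS ih.
  by rewrite -[LHS]fineK ?gg'Ei ?fineK ?fin_int.
have : {ae mu, forall x i, g x 0 i = g' x 0 i}.
  by apply: filter_forall => i; apply: filterS (ae_coord i) => x /(_ I) [].
by apply: filterS => x gg'x; apply/rowP => i; exact: gg'x.
Qed.

Section density.
Variable g : T -> 'rV[K]_n.
Hypothesis nu_g : is_density mu nu g.

Lemma is_density_null A : measurable A -> mu A = 0%E -> nu A = 0.
Proof.
have [mg _ dg] := nu_g; move=> mA muA0; rewrite dg //; apply/rowP => i; rewrite !mxE.
by rewrite null_set_integral //=; apply/measurable_EFinP; exact: measurable_funTS.
Qed.

Lemma lebesgue_decomp_ae_eq g' N : lebesgue_decomp mu nu g' N -> {ae mu, forall x, g' x = g x}.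
Proof.
have [_ ig dg] := nu_g; move=> [_ ig' mN muN0 dg'].
apply: dens_vmeasure_ae_eq => // A mA.
rewrite -dg // dg' // (is_density_null (measurableI _ _ mA mN)) ?addr0 //.
exact: subset_measure0 (measurableI _ _ mA mN) mN (@subIsetr _ _ _) muN0.
Qed.

Lemma Hfun_density : Hfun mu nu = (\int[mu]_x (lift_norm (g x))%:E)%E.
Proof.
have [mg ig dg] := nu_g.
have Hg : H_value mu nu (\int[mu]_x (lift_norm (g x))%:E)%E.
  exists g, set0; split.
    by split => // A mA; rewrite setI0 (is_density_null measurable0) ?measure0 // addr0 dg.
  rewrite total_variation_on_eq0 ?adde0 // => A mA; rewrite subset0 => ->.
  by rewrite is_density_null ?measure0.
rewrite /Hfun; have [g' [N [g'N ->]]] := xgetPex +oo%E (ex_intro _ _ Hg).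
have [mg' _ mN muN0 _] := g'N.
rewrite total_variation_on_eq0 ?adde0; last first.
  by move=> A mA AN; apply: is_density_null => //; exact: subset_measure0 mA mN AN muN0.
apply: ae_eq_integral => //; try exact/measurable_EFinP/measurable_lift_norm.
by apply: filterS (lebesgue_decomp_ae_eq g'N) => x ->.
Qed.

End density.
End Hfun_density.

Lemma measurableT_preimage (d d' : measure_display) (T : measurableType d)
  (U : measurableType d') (e : T -> U) (B : set U) :
  measurable_fun setT e -> measurable B -> measurable (e @^-1` B).
Proof. by move=> me mB; rewrite -[X in measurable X]setTI; exact: me. Qed.

Section integral_comp.
Local Open Scope ereal_scope.
Variables (dS dR : measure_display) (S : measurableType dS) (R : measurableType dR).
Variables (K : realType) (lam : {measure set S -> \bar K}) (e : S -> R).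
Hypothesis me : measurable_fun setT e.

Lemma ge0_integral_comp_nnsfun_mul (h : {nnsfun R >-> K}) (P : S -> \bar K) :
  measurable_fun setT P -> (forall x, 0 <= P x) ->
  \int[lam]_x ((h (e x))%:E * P x) =
  \sum_(y \in range h) (y%:E * \int[lam]_(x in e @^-1` (h @^-1` [set y])) P x).
Proof.
move=> mP P0.
have mhy y : measurable_fun setT (fun x => (y * \1_(h @^-1` [set y]) (e x))%:E * P x).
  apply: emeasurable_funM => //; apply/measurable_EFinP.
  by apply: measurable_funM => //; exact: measurableT_comp.
transitivity (\int[lam]_x (\sum_(y \in range h)
    ((y * \1_(h @^-1` [set y]) (e x))%:E * P x))).
  apply: eq_integral => x _; rewrite fimfunE -fsumEFin //.
  by rewrite ge0_mule_fsuml // => y; exact: nnfun_muleindic_ge0.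
rewrite ge0_integral_fsum //; last by move=> y x _; rewrite mule_ge0 // nnfun_muleindic_ge0.
apply: eq_fsbigr => y /[!inE] hy.
have y0 : (0 <= y)%R by case: hy => t _ <-.
under eq_integral do rewrite EFinM -muleA.
rewrite ge0_integralZl //; last 2 first.
- apply: emeasurable_funM => //; apply/measurable_EFinP.
  by apply: measurableT_comp => //; apply: measurable_indic; exact: measurableT_preimage me.
- by move=> x _; rewrite mule_ge0 // lee_fin.
congr (_ * _); rewrite -[e @^-1` _]setTI integral_mkcondr; apply: eq_integral => x _.
by rewrite epatch_indic /= muleC /preimage /= indicE.
Qed.

Lemma ge0_integral_comp_mul_eq (k : R -> \bar K) (P Q : S -> \bar K) :
  measurable_fun setT k -> (forall y, 0 <= k y) ->
  measurable_fun setT P -> (forall x, 0 <= P x) -> (forall x, P x \is a fin_num) ->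
  measurable_fun setT Q -> (forall x, 0 <= Q x) -> (forall x, Q x \is a fin_num) ->
  (forall B, measurable B ->
     \int[lam]_(x in e @^-1` B) P x = \int[lam]_(x in e @^-1` B) Q x) ->
  \int[lam]_x (k (e x) * P x) = \int[lam]_x (k (e x) * Q x).
Proof.
move=> mk k0 mP P0 Pfin mQ Q0 Qfin PQ.
pose h := nnsfun_approx measurableT mk.
have approx F : measurable_fun setT F -> (forall x, 0 <= F x) ->
    (forall x, F x \is a fin_num) ->
    \int[lam]_x (k (e x) * F x) = limn (fun n => \int[lam]_x ((h n (e x))%:E * F x)).
  move=> mF F0 Ffin; rewrite -monotone_convergence //.
  - apply: eq_integral => x _; apply/esym/cvg_lim => //.
    rewrite muleC; under eq_fun do rewrite muleC.
    by apply: cvgeZl => //; exact: cvg_nnsfun_approx.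
  - move=> n; apply: emeasurable_funM => //; apply/measurable_EFinP.
    exact: measurableT_comp.
  - by move=> n x _; rewrite mule_ge0 // lee_fin.
  - move=> x _ a b ab /=; rewrite lee_wpmul2r // lee_fin.
    exact/lefP/nd_nnsfun_approx.
rewrite (approx P) // (approx Q) //; congr (limn _); apply/funext => n.
rewrite !ge0_integral_comp_nnsfun_mul //; apply: eq_fsbigr => y _.
by rewrite PQ //; apply: measurableT_preimage me; exact: measurable_funP.
Qed.

Lemma integral_preimage_funepos_funeneg (u : S -> \bar K) B :
  lam.-integrable setT u -> measurable B ->
  \int[lam]_(x in e @^-1` B) u x = 0 ->
  \int[lam]_(x in e @^-1` B) u^\+ x = \int[lam]_(x in e @^-1` B) u^\- x.
Proof.
move=> iu mB; have meB := measurableT_preimage me mB.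
have iuB := integrableS measurableT meB (@subsetT _ _) iu.
rewrite integralE => /eqP; rewrite sube_eq ?add0e => [/eqP //||].
- exact: integrable_pos_fin_num meB _ iuB.
- exact: fin_num_adde_defr.
Qed.

Lemma integral_comp_mul_eq0 (u : S -> K) (k : R -> K) (M : K) :
  lam.-integrable setT (EFin \o u) ->
  (forall B, measurable B -> \int[lam]_(x in e @^-1` B) (u x)%:E = 0) ->
  measurable_fun setT k -> (forall y, `|k y| <= M)%R ->
  \int[lam]_x (k (e x) * u x)%:E = 0.
Proof.
move=> iu u0 mk kM.
(* [k + M >= 0], so the nonnegative case applies to [u^+] and [u^-] separately. *)
pose up := (EFin \o u)^\+; pose un := (EFin \o u)^\-.
pose k' y := (k y + M)%R.
have k'_ge0 y : (0 <= k' y)%R.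
  by rewrite -lerBlDr sub0r; move: (kM y); rewrite ler_norml => /andP[].
have mk' : measurable_fun setT (fun x => k' (e x)).
  by apply: measurable_funD => //; exact: measurableT_comp.
have upE x : up x = (Num.max (u x) 0)%:E by rewrite /up funeposE /= -EFin_max.
have unE x : un x = (Num.max (- u x) 0)%:E.
  by rewrite /un funenegE (_ : (EFin \o u) x = (u x)%:E) // -EFinN -EFin_max.
have up_fin x : up x \is a fin_num by rewrite upE.
have un_fin x : un x \is a fin_num by rewrite unE.
have iup := integrable_funepos measurableT iu.
have iun := integrable_funeneg measurableT iu.
have k'_bounded : [bounded k' (e x) | x in setT].
  exists (M + `|M|)%R; split; first by rewrite num_real.
  move=> N MN x _ /=; apply: ltW; apply: le_lt_trans MN.
  by apply: le_trans (ler_normD _ _) _; rewrite lerD2r.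
have ik'up := integrableMr measurableT mk' k'_bounded iup.
have ik'un := integrableMr measurableT mk' k'_bounded iun.
have k'up_k'un : \int[lam]_x ((k' (e x))%:E * up x) = \int[lam]_x ((k' (e x))%:E * un x).
  have mEu := measurable_int _ iu.
  apply: (ge0_integral_comp_mul_eq (k := EFin \o k')) => //=.
  - exact/measurable_EFinP/measurable_funD.
  - exact: measurable_funepos.
  - exact: funepos_ge0.
  - exact: measurable_funeneg.
  - exact: funeneg_ge0.
  - by move=> B mB; apply: integral_preimage_funepos_funeneg => //; exact: u0.
transitivity (\int[lam]_x (((k' (e x))%:E * up x - (k' (e x))%:E * un x)
                           - M%:E * (u x)%:E)).
  apply: eq_integral => x _; rewrite upE unE -!EFinM -!EFinB /k'; congr EFin.
  have [u_ge0|u_lt0] := leP 0%R (u x).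
    by rewrite (max_idPr _) ?oppr_le0 //; ring.
  by rewrite (max_idPl _) ?oppr_ge0 ?(ltW u_lt0) //; ring.
rewrite integralB //; [|exact: integrableB|exact: integrableZl].
rewrite integralB // k'up_k'un subee ?integrable_fin_num // integralZl //.
by rewrite -[setT](preimage_setT e) u0 // mule0 sube0.
Qed.

End integral_comp.

Section pushforward_density.
Variables (K : realType) (dR dS : measure_display).
Variables (R : measurableType dR) (S : measurableType dS) (n : nat).
Variables (e : S -> R) (lam : {finite_measure set S -> \bar K}).
Variables (f : S -> 'rV[K]_n) (v : R -> 'rV[K]_n).
Hypotheses (me : measurable_fun setT e).
Hypotheses (mf : forall i, measurable_fun setT (fun x => f x 0 i)).
Hypotheses (intf : forall i, lam.-integrable setT (fun x => (f x 0 i)%:E)).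
Hypothesis v_dens :
  is_density (pushforward lam e) (push_vmeasure (dens_vmeasure lam f) e) v.

Let mv : forall i, measurable_fun setT (fun y => v y 0 i).
Proof. by case: v_dens. Qed.

Let mve i : measurable_fun setT (fun x => v (e x) 0 i).
Proof. exact: measurableT_comp (mv i) me. Qed.

Lemma integrable_density_comp i : lam.-integrable setT (fun x => (v (e x) 0 i)%:E).
Proof.
have [_ iv _] := v_dens; apply/integrableP; split; first exact/measurable_EFinP.
move/integrableP: (iv i) => [_]; rewrite ge0_integral_pushforward //.
by apply: measurableT_comp => //; exact/measurable_EFinP.
Qed.

Lemma integral_preimage_sub_density_comp i B : measurable B ->
  (\int[lam]_(x in e @^-1` B) (f x 0 i - v (e x) 0 i)%:E = 0)%E.
Proof.
move=> mB; have [_ _ dv] := v_dens; have meB := measurableT_preimage me mB.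
have ifB := integrableS measurableT meB (@subsetT _ _) (intf i).
have iveB := integrableS measurableT meB (@subsetT _ _) (integrable_density_comp i).
have /rowP /(_ i) := dv B mB; rewrite /push_vmeasure /dens_vmeasure !mxE.
rewrite integral_pushforward //; last exact/measurable_EFinP.
move=> fve; under eq_integral do rewrite EFinB.
rewrite integralB // -[X in (X - _)%E]fineK ?integrable_fin_num //.
by rewrite fve fineK ?integrable_fin_num // subee ?integrable_fin_num.
Qed.

Lemma Hfun_pushforward_density :
  Hfun (pushforward lam e) (push_vmeasure (dens_vmeasure lam f) e) =
  (\int[lam]_x (lift_norm (v (e x)))%:E)%E.
Proof.
rewrite (Hfun_density v_dens) ge0_integral_pushforward //.
- exact/measurable_EFinP/measurable_lift_norm.
- by move=> y _; rewrite lee_fin ltW ?lift_norm_gt0.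
Qed.

Let u i x := f x 0 i - v (e x) 0 i.
Let grad_u i x := (lift_grad (v (e x)) i * u i x)%:E.

Let integrable_u i : lam.-integrable setT (EFin \o u i).
Proof.
rewrite (_ : _ \o _ = (fun x => (f x 0 i)%:E) \- (fun x => (v (e x) 0 i)%:E))%E.
  exact: integrableB (intf i) (integrable_density_comp i).
by apply/funext => x; rewrite /= EFinB.
Qed.

Let integrable_grad_u i : lam.-integrable setT (grad_u i).
Proof.
have grad_bounded : [bounded lift_grad (v (e x)) i | x in setT].
  exists 1%R; split; first by rewrite num_real.
  by move=> M M1 x _; apply: ltW; apply: le_lt_trans M1; exact: norm_lift_grad_le1.
have mgrad := measurableT_comp (measurable_lift_grad mv i) me.
have := integrableMr measurableT mgrad grad_bounded (integrable_u i).
by apply: eq_integrable => // x _ /=; rewrite /grad_u EFinM.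
Qed.

Let integral_grad_u i : (\int[lam]_x grad_u i x = 0)%E.
Proof.
apply: (integral_comp_mul_eq0 me (k := fun y => lift_grad (v y) i) (M := 1%R)) => //.
- exact: integral_preimage_sub_density_comp.
- exact: measurable_lift_grad.
- by move=> y; exact: norm_lift_grad_le1.
Qed.

Let bregmanE : (fun x => (bregman (f x) (v (e x)))%:E) =
  ((fun x => (lift_norm (f x))%:E) \- (fun x => (lift_norm (v (e x)))%:E)
   \- (fun x => \sum_(i < n) grad_u i x))%E.
Proof. by apply/funext => x; rewrite /= sumEFin -!EFinB. Qed.

Let integrable_lift_norm_f := integrable_lift_norm mf intf.
Let integrable_lift_norm_ve := integrable_lift_norm mve integrable_density_comp.

Let integrable_sum_grad_u : lam.-integrable setT (fun x => \sum_(i < n) grad_u i x).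
Proof. exact: integrable_sum. Qed.

Lemma integrable_bregman_density_comp :
  lam.-integrable setT (fun x => (bregman (f x) (v (e x)))%:E).
Proof. by rewrite bregmanE; apply: integrableB => //; exact: integrableB. Qed.

Lemma integral_bregman_density_comp :
  (\int[lam]_x (bregman (f x) (v (e x)))%:E =
   \int[lam]_x (lift_norm (f x))%:E - \int[lam]_x (lift_norm (v (e x)))%:E)%E.
Proof.
rewrite bregmanE integralB //; last exact: integrableB.
by rewrite integralB // integral_sum // big1 ?sube0 // => i _; exact: integral_grad_u.
Qed.

End pushforward_density.

Unset Implicit Arguments.
Theorem lemma5p10 (K : realType) (dR dS : measure_display)
  (R : measurableType dR) (S : measurableType dS) (d : nat)
  (e : S -> R) (f : S -> 'rV[K]_d) (lam : {finite_measure set S -> \bar K})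
  (v : R -> 'rV[K]_d) :
  polish_borel K R -> polish_borel K S ->
  measurable_fun setT e ->
  (forall i, measurable_fun setT (fun x => f x 0 i)) ->
  (forall i, lam.-integrable setT (fun x => (f x 0 i)%:E)) ->
  Hfun (pushforward lam e) (push_vmeasure (dens_vmeasure lam f) e)
    = Hfun lam (dens_vmeasure lam f) ->
  is_density (pushforward lam e) (push_vmeasure (dens_vmeasure lam f) e) v ->
  {ae lam, forall x, f x = v (e x)}.
Proof.
move=> _ _ me mf intf HH v_dens.
have f_dens : is_density lam (dens_vmeasure lam f) f by split.
rewrite (Hfun_pushforward_density me v_dens) (Hfun_density f_dens) in HH.
have ibregman := integrable_bregman_density_comp me mf intf v_dens.
have : (\int[lam]_x `|(bregman (f x) (v (e x)))%:E| = 0)%E.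
  under eq_integral do rewrite abse_EFin (ger0_norm (bregman_ge0 _ _)).
  rewrite (integral_bregman_density_comp me mf intf v_dens) HH subee //.
  exact/integrable_fin_num/integrable_lift_norm.
move=> /(ae_eq_integral_abs _ measurableT (measurable_int _ ibregman)).
by apply: filterS => x /(_ I) [] /bregman_eq0.
Qed.
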